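(* Let $h_1$ and $h_2$ be hybrid path-sums such that the sum $a h_1 \boxplus h_2$ is defined, and let $a$ be a constructible real number. Then $\xi(a h_1 \boxplus h_2) = a\,\xi(h_1) + \xi(h_2)$ (as functions of histories). Moreover, whenever $h_1 \otimes h_2$ is defined, $\xi(h_1 \otimes h_2) = \xi(h_1)\otimes \xi(h_2)$, i.e. $\xi(h_1\otimes h_2)(\eta_1\otimes\eta_2)=\xi(h_1)(\eta_1)\otimes\xi(h_2)(\eta_2)$ for all histories $\eta_1$ of $h_1$ and $\eta_2$ of $h_2$.
   Context: Hybrid path-sums (HPS). Fix Boolean input variables $x_i$ and Boolean path variables $y_j$. An HPS is $h=\langle P, o, s\rangle_{su}$ where: $su$ (the support) is a finite set of path variables, and only input variables and variables of $su$ occur in $P,o,s$; the output $o=(o_{Qu},o_{Cl})$ consists of a quantum memory $o_{Qu}$, a finite map from quantum addresses to Boolean polynomials (over $\mathbb F_2$) in the $x_i,y_j$, and a classical memory $o_{Cl}$, a stack (list) of finite partial maps from classical addresses to Boolean polynomials in the $x_i,y_j$ recording the values of the classical memory at successive time steps (the top entry is the current value; the height of the stack is the age of $h$); the phase $P$ is a polynomial in the $x_i,y_j$ with dyadic rational coefficients; the scalar $s$ is a constructible-real-valued expression in the $x_i,y_j$. A history $\eta$ is a full Boolean instantiation of a classical memory stack. For fixed values of the inputs, the vector map of $h$ is $\xi(h)(\eta)=\sum_{\vec y\in\{0,1\}^{su},\ o_{Cl}(\vec y)=\eta} s(\vec y)\,e^{2\pi i P(\vec y)}\,|o_{Qu}(\vec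 y)\rangle$, a vector in the Hilbert space spanned by computational basis states of the quantum addresses. Sum: for $h_1=\langle P_1,o_1,s_1\rangle_{su_1}$, $h_2=\langle P_2,o_2,s_2\rangle_{su_2}$ with the same addresses and age, and $r$ a constructible real, $r h_1\boxplus h_2:=\langle P,o,s\rangle_{su_1\cup su_2\cup\{y_f\}}$ with $y_f$ a fresh path variable, where (using Boolean selection on $y_f$) for $y_f=0$: $P=P_1$, $o=o_1$, $s=r\,s_1\prod_{y\in su_2\setminus su_1}y$; for $y_f=1$: $P=P_2$, $o=o_2$, $s=s_2\prod_{y\in su_1\setminus su_2}y$. Tensor: if $su_1\cap su_2=\emptyset$ and the quantum addresses and the classical (address, time) cells of $o_1,o_2$ are disjoint, $h_1\otimes h_2:=\langle P_1+P_2, o_1\cup o_2, s_1 s_2\rangle_{su_1\cup su_2}$; the combined history of $\eta_1,\eta_2$ is written $\eta_1\otimes\eta_2$. *)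

From HB Require Import structures.
From mathcomp Require Import all_boot all_order all_algebra.
From mathcomp Require Import finmap.
From mathcomp Require Import complex.
From mathcomp Require Import reals trigo.
Set Implicit Arguments. Unset Strict Implicit. Unset Printing Implicit Defensive.
Import Order.TTheory GRing.Theory Num.Theory.
Local Open Scope ring_scope.
Local Open Scope fset_scope.
Local Open Scope fmap_scope.
Local Open Scope complex_scope.

(* Variables: inl i = input variable x_i, inr j = path variable y_j.       *)
Definition var := (nat + nat)%type.
Definition xv (i : nat) : var := inl i.
Definition yv (j : nat) : var := inr j.

Definition var_eval (vx vy : nat -> bool) (v : var) : bool :=
  match v with inl i => vx i | inr j => vy j end.

Definition monomial := seq var.
Definition mon_eval vx vy (m : monomial) : bool := all (var_eval vx vy) m.
Definition mon_yvars (m : monomial) : seq nat :=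
  pmap (fun v : var => if v is inr j then Some j else None) m.

Definition bpoly := seq monomial.
Definition bpoly_eval vx vy (p : bpoly) : bool :=
  foldr (fun m b => mon_eval vx vy m (+) b) false p.
Definition bpoly_yvars (p : bpoly) : seq nat := flatten (map mon_yvars p).

Definition dyadic := (int * nat)%type.
Definition dyadic_val (R : realType) (d : dyadic) : R := d.1%:~R / (2%:R ^+ d.2).
Definition phase := seq (dyadic * monomial).
Definition phase_eval (R : realType) vx vy (P : phase) : R :=
  \sum_(c <- P) dyadic_val R c.1 * (mon_eval vx vy c.2)%:R.
Definition phase_yvars (P : phase) : seq nat := flatten (map (fun c => mon_yvars c.2) P).

Inductive constructible (R : realType) : R -> Prop :=
| constr_rat (q : rat) : constructible (ratr q)
| constr_add x y : constructible x -> constructible y -> constructible (x + y)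
| constr_opp x : constructible x -> constructible (- x)
| constr_mul x y : constructible x -> constructible y -> constructible (x * y)
| constr_inv x : x != 0 -> constructible x -> constructible (x^-1)
| constr_sqrt x : 0 <= x -> constructible x -> constructible (Num.sqrt x).

(* Classical memory: a stack of finite partial maps; the stack is a list  *)
(* indexed by time steps (nth 0 = oldest, last = top/current value); its  *)
(* size is the age.                                                       *)
Definition qmem := {fmap nat -> bpoly}.
Definition cmem := seq {fmap nat -> bpoly}.

(* Hybrid path-sum  < P, (o_Qu, o_Cl), s >_su  (scalar given by its value  *)
(* as a function of the valuation of the variables).                      *)
Record hps (R : realType) := HPS {
  hsu : {fset nat};
  hP  : phase;
  hqu : qmem;
  hcl : cmem;
  hs  : (nat -> bool) -> (nat -> bool) -> R }.

Definition wf_hps (R : realType) (h : hps R) : Prop :=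
  [/\ {subset phase_yvars (hP h) <= hsu h},
      (forall k : domf (hqu h), {subset bpoly_yvars (hqu h k) <= hsu h}),
      (forall m, m \in hcl h -> forall k : domf m, {subset bpoly_yvars (m k) <= hsu h}),
      (forall vx vy vy', {in hsu h, vy =1 vy'} -> hs h vx vy = hs h vx vy') &
      (forall vx vy, constructible (hs h vx vy))].

Definition history := seq {fmap nat -> bool}.
Definition basis := {fmap nat -> bool}.

Definition inst_map vx vy (m : {fmap nat -> bpoly}) : {fmap nat -> bool} :=
  [fmap k : domf m => bpoly_eval vx vy (m k)].
Definition inst_stack vx vy (s : cmem) : history := map (inst_map vx vy) s.

Definition is_history (R : realType) (h : hps R) (eta : history) : bool :=
  all2 (fun (m : {fmap nat -> bpoly}) (e : {fmap nat -> bool}) => domf e == domf m) (hcl h) eta.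

Definition qvec (R : realType) := basis -> R[i].
Definition ket (R : realType) (b : basis) : qvec R := fun b' => ((b' == b)%:R : R)%:C.
Definition expi (R : realType) (t : R) : R[i] :=
  (cos (2%:R * pi * t)) +i* (sin (2%:R * pi * t)).

Definition valS (S : {fset nat}) : nat -> bool := fun j => j \in S.

Definition xi (R : realType) (h : hps R) (vx : nat -> bool) (eta : history) : qvec R :=
  fun b => \sum_(S <- fpowerset (hsu h) | inst_stack vx (valS S) (hcl h) == eta)
     (hs h vx (valS S))%:C * expi (phase_eval R vx (valS S) (hP h))
       * ket R (inst_map vx (valS S) (hqu h)) b.

Definition bsel (yf : nat) (p1 p2 : bpoly) : bpoly :=
  (* (1 + yf) p1 + yf p2  over F_2 *)
  p1 ++ [seq yv yf :: m | m <- p1] ++ [seq yv yf :: m | m <- p2].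
Definition psel (yf : nat) (P1 P2 : phase) : phase :=
  (* (1 - yf) P1 + yf P2 *)
  P1 ++ [seq ((- c.1.1, c.1.2), yv yf :: c.2) | c <- P1]
     ++ [seq (c.1, yv yf :: c.2) | c <- P2].
Definition msel (yf : nat) (m1 m2 : {fmap nat -> bpoly}) : {fmap nat -> bpoly} :=
  [fmap k : domf m1 => bsel yf (m1 k) (odflt [::] m2.[? val k])].

Definition prodY (R : realType) (A : {fset nat}) (vy : nat -> bool) : R :=
  \prod_(j <- A) (vy j)%:R.

Definition sum_defined (R : realType) (h1 h2 : hps R) : Prop :=
  [/\ domf (hqu h1) = domf (hqu h2),
      size (hcl h1) = size (hcl h2) &
      forall t, domf (nth [fmap] (hcl h1) t) = domf (nth [fmap] (hcl h2) t)].

Definition boxplus (R : realType) (r : R) (yf : nat) (h1 h2 : hps R) : hps R :=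
  HPS (hsu h1 `|` hsu h2 `|` [fset yf])
      (psel yf (hP h1) (hP h2))
      (msel yf (hqu h1) (hqu h2))
      [seq msel yf mm.1 mm.2 | mm <- zip (hcl h1) (hcl h2)]
      (fun vx vy => if vy yf then hs h2 vx vy * prodY R (hsu h1 `\` hsu h2) vy
                    else r * hs h1 vx vy * prodY R (hsu h2 `\` hsu h1) vy).

Definition stack_union (V : Type) (s1 s2 : seq {fmap nat -> V}) : seq {fmap nat -> V} :=
  mkseq (fun t => catf (nth [fmap] s1 t) (nth [fmap] s2 t)) (maxn (size s1) (size s2)).

Definition tensor_defined (R : realType) (h1 h2 : hps R) : Prop :=
  [/\ [disjoint hsu h1 & hsu h2],
      [disjoint domf (hqu h1) & domf (hqu h2)] &
      forall t, [disjoint domf (nth [fmap] (hcl h1) t) & domf (nth [fmap] (hcl h2) t)]].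

Definition tensor (R : realType) (h1 h2 : hps R) : hps R :=
  HPS (hsu h1 `|` hsu h2) (hP h1 ++ hP h2) (catf (hqu h1) (hqu h2))
      (stack_union (hcl h1) (hcl h2)) (fun vx vy => hs h1 vx vy * hs h2 vx vy).

Definition hist_tensor (eta1 eta2 : history) : history := stack_union eta1 eta2.

Definition vtensor (R : realType) (A1 A2 : {fset nat}) (v1 v2 : qvec R) : qvec R :=
  fun b => if domf b == A1 `|` A2 then v1 b.[& A1] * v2 b.[& A2] else 0.

(* Both identities are checked valuation by valuation of the path variables.
   For the sum, a valuation of su1 ∪ su2 ∪ {y_f} with y_f = 0 (resp. y_f = 1)
   contributes, through Boolean selection, r times the term of h1 (resp. the
   term of h2); the factor ∏ y over the variables of the other support kills
   every such valuation except the one setting those variables to 1, and the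
   term does not depend on them.  For the tensor product, a valuation of the
   disjoint union su1 ∪ su2 is a pair of valuations, the phases add and the
   memories are disjoint unions, so each term factors; the condition on the
   classical stack splits into the conditions on eta1 and eta2 because the two
   stacks are disjoint at every time step. *)

From HB Require Import structures.
From mathcomp Require Import all_boot all_order all_algebra.
From mathcomp Require Import finmap complex reals trigo.
From mathcomp Require Import ring.
Set Implicit Arguments. Unset Strict Implicit.
Import GRing.Theory Num.Theory.
Local Open Scope fset_scope.
Local Open Scope fmap_scope.
Local Open Scope ring_scope.
Local Open Scope complex_scope.

Section PowersetSums.
Variables (K : choiceType) (V : nmodType).
Implicit Types (A B : {fset K}) (F : {fset K} -> V).

Lemma big_fpowersetU A B F : [disjoint A & B] ->
  \sum_(S <- fpowerset (A `|` B)) F S =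
  \sum_(S1 <- fpowerset A) \sum_(S2 <- fpowerset B) F (S1 `|` S2).
Proof.
move=> dAB.
have capA S1 S2 : S1 `<=` A -> S2 `<=` B -> (S1 `|` S2) `&` A = S1.
  move=> /fsetIidPl S1A S2B; rewrite fsetIUl S1A disjoint_fsetI0 ?fsetU0 //.
  by rewrite (fdisjointWl S2B) // fdisjoint_sym.
have capB S1 S2 : S1 `<=` A -> S2 `<=` B -> (S1 `|` S2) `&` B = S2.
  move=> S1A /fsetIidPl S2B; rewrite fsetIUl S2B disjoint_fsetI0 ?fset0U //.
  exact: fdisjointWl S1A dAB.
rewrite -big_allpairs_dep /=; apply/perm_big/uniq_perm; first exact: fset_uniq.
  apply: allpairs_uniq; try exact: fset_uniq.
  move=> _ _ /allpairsP[[U1 U2] /= [+ + ->]] /allpairsP[[W1 W2] /= [+ + ->]] /=.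
  rewrite !fpowersetE => U1A U2B W1A W2B E; congr pair.
    by rewrite -(capA _ _ U1A U2B) -(capA _ _ W1A W2B) E.
  by rewrite -(capB _ _ U1A U2B) -(capB _ _ W1A W2B) E.
move=> S; rewrite fpowersetE; apply/idP/allpairsP => [SAB|[[S1 S2] /= []]].
  exists (S `&` A, S `&` B); rewrite /= !fpowersetE !fsubsetIr -fsetIUr.
  by split=> //; apply/esym/fsetIidPl.
by rewrite !fpowersetE => S1A S2B ->; apply: fsetUSS.
Qed.

Lemma big_fpowersetU1 A a F : a \notin A ->
  \sum_(S <- fpowerset (A `|` [fset a])) F S =
  \sum_(S <- fpowerset A) (F S + F (S `|` [fset a])).
Proof.
move=> aA; rewrite big_fpowersetU ?fdisjointX1 //; apply: eq_bigr => S _.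
rewrite fpowerset1 big_fsetU1 ?big_seq_fset1 ?fsetU0 // inE.
by apply/eqP => /fsetP /(_ a); rewrite !inE eqxx.
Qed.

Lemma big_fpowerset_supset A B F : [disjoint A & B] ->
  \sum_(S <- fpowerset (A `|` B)) (if B `<=` S then F S else 0) =
  \sum_(T <- fpowerset A) F (T `|` B).
Proof.
move=> dAB; rewrite big_fpowersetU //; apply: eq_big_seq => T; rewrite fpowersetE => TA.
rewrite (bigD1_seq B) ?fpowersetE ?fset_uniq //= fsubsetUr big1_seq ?addr0 //.
move=> U /andP[UB]; rewrite fpowersetE => UsubB; case: ifP => // /fsubsetP BTU.
case/negP: UB; rewrite eqEfsubset UsubB; apply/fsubsetP => x xB.
have /fsetUP[xT|//] := BTU x xB.
by have /fdisjointP/(_ x (fsubsetP TA x xT)) := dAB; rewrite xB.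
Qed.

End PowersetSums.

Lemma catf_inj (V : Type) (f f' g g' : {fmap nat -> V}) :
  domf f = domf f' -> domf g = domf g' -> [disjoint domf f & domf g] ->
  catf f g = catf f' g' -> f = f' /\ g = g'.
Proof.
move=> eq_f eq_g /fdisjointP dfg eq_cat.
have eq_k k : (if k \in domf g then g.[? k] else f.[? k]) =
              (if k \in domf g then g'.[? k] else f'.[? k]).
  have kg : (k \in domf g') = (k \in domf g) by rewrite eq_g.
  by have := congr1 (fun m : {fmap nat -> V} => m.[? k]) eq_cat; rewrite /= !fnd_cat kg.
split; apply/fmapP => k; have := eq_k k; case: ifP => // kg _.
  have kNf : k \notin domf f by apply: contraTN kg; apply: dfg.
  have kNf' : k \notin domf f' by rewrite -eq_f.
  by rewrite (not_fnd kNf) (not_fnd kNf').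
have kNg' : k \notin domf g' by rewrite -eq_g kg.
by rewrite (not_fnd (negbT kg)) (not_fnd kNg').
Qed.

Lemma eq_catf_restrict (i1 i2 b : {fmap nat -> bool}) :
  [disjoint domf i1 & domf i2] ->
  (b == catf i1 i2) =
  [&& domf b == domf i1 `|` domf i2, b.[& domf i1] == i1 & b.[& domf i2] == i2].
Proof.
move=> /fdisjointP dj; apply/eqP/and3P => [->|[/eqP eq_dom /eqP E1 /eqP E2]].
  split; first by rewrite domf_cat.
    apply/eqP/fmapP => k; rewrite fnd_restrict fnd_cat.
    by case: ifP => k1; [rewrite (negbTE (dj k k1)) | rewrite (not_fnd (negbT k1))].
  apply/eqP/fmapP => k; rewrite fnd_restrict fnd_cat.
  by case: ifP => k2; rewrite ?k2 // (not_fnd (negbT k2)).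
apply/fmapP => k; rewrite fnd_cat.
case k2: (k \in domf i2); first by rewrite -E2 fnd_restrict k2.
case k1: (k \in domf i1); first by rewrite -E1 fnd_restrict k1.
have kNb : k \notin domf b by rewrite eq_dom inE k1 k2.
by rewrite (not_fnd kNb) (not_fnd (negbT k1)).
Qed.

Lemma stack_union_inj (V : Type) (s1 s2 e1 e2 : seq {fmap nat -> V}) :
  size s1 = size e1 -> size s2 = size e2 ->
  (forall t, domf (nth [fmap] s1 t) = domf (nth [fmap] e1 t)) ->
  (forall t, domf (nth [fmap] s2 t) = domf (nth [fmap] e2 t)) ->
  (forall t, [disjoint domf (nth [fmap] s1 t) & domf (nth [fmap] s2 t)]) ->
  stack_union s1 s2 = stack_union e1 e2 -> s1 = e1 /\ s2 = e2.
Proof.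
move=> size1 size2 dom1 dom2 dj eq_union.
have eq_nth t : (t < maxn (size s1) (size s2))%N ->
    nth [fmap] s1 t = nth [fmap] e1 t /\ nth [fmap] s2 t = nth [fmap] e2 t.
  move=> tlt; apply: catf_inj => //.
  have := congr1 (fun s => nth [fmap] s t) eq_union.
  by rewrite /stack_union !nth_mkseq -?size1 -?size2.
split; apply: (eq_from_nth (x0 := [fmap])) => // t ts.
  by case: (eq_nth t); rewrite // leq_max ts.
by case: (eq_nth t); rewrite // leq_max ts orbT.
Qed.

Section Evaluation.
Variable vx : nat -> bool.
Implicit Types (vy : nat -> bool).

Lemma eq_mon_eval vy vy' (m : monomial) :
  {in mon_yvars m, vy =1 vy'} -> mon_eval vx vy m = mon_eval vx vy' m.
Proof.
elim: m => [|[i|j] m IHm] //= eq_vy; first by rewrite IHm.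
by rewrite eq_vy ?mem_head // IHm // => z zm; rewrite eq_vy // inE zm orbT.
Qed.

Lemma bpoly_eval_cons vy (m : monomial) (p : bpoly) :
  bpoly_eval vx vy (m :: p) = mon_eval vx vy m (+) bpoly_eval vx vy p.
Proof. by []. Qed.

Lemma eq_bpoly_eval vy vy' (p : bpoly) :
  {in bpoly_yvars p, vy =1 vy'} -> bpoly_eval vx vy p = bpoly_eval vx vy' p.
Proof.
elim: p => [|m p IHp] // eq_vy; rewrite !bpoly_eval_cons.
by rewrite (eq_mon_eval (vy' := vy')) ?IHp // => z zp; rewrite eq_vy // mem_cat zp ?orbT.
Qed.

Lemma eq_phase_eval (R : realType) vy vy' (P : phase) :
  {in phase_yvars P, vy =1 vy'} -> phase_eval R vx vy P = phase_eval R vx vy' P.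
Proof.
rewrite /phase_eval; elim: P => [|c P IHP] eq_vy; first by rewrite !big_nil.
rewrite !big_cons (eq_mon_eval (vy' := vy')) ?IHP // => z zP.
  by rewrite eq_vy // mem_cat zP orbT.
by rewrite eq_vy // mem_cat zP.
Qed.

Lemma fnd_inst_map vy (m : {fmap nat -> bpoly}) k :
  (inst_map vx vy m).[? k] = omap (bpoly_eval vx vy) m.[? k].
Proof.
case: (fndP m k) => [km|kNm]; last by rewrite not_fnd.
by rewrite (@in_fnd _ _ (inst_map vx vy m) k km) ffunE.
Qed.

Lemma eq_inst_map vy vy' (m : {fmap nat -> bpoly}) :
  (forall k : domf m, {in bpoly_yvars (m k), vy =1 vy'}) ->
  inst_map vx vy m = inst_map vx vy' m.
Proof.
move=> eq_vy; apply/fmapP => k; rewrite !fnd_inst_map.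
by case: (fndP m k) => // km /=; rewrite (eq_bpoly_eval (eq_vy [` km])).
Qed.

Lemma bpoly_eval_cat vy (p q : bpoly) :
  bpoly_eval vx vy (p ++ q) = bpoly_eval vx vy p (+) bpoly_eval vx vy q.
Proof. by elim: p => [|m p IHp] //; rewrite cat_cons !bpoly_eval_cons IHp addbA. Qed.

Lemma bpoly_eval_mulv vy v (p : bpoly) :
  bpoly_eval vx vy [seq v :: m | m <- p] = var_eval vx vy v && bpoly_eval vx vy p.
Proof.
elim: p => [|m p IHp]; first by rewrite andbF.
by rewrite map_cons !bpoly_eval_cons IHp /=; case: (var_eval vx vy v).
Qed.

Lemma bpoly_eval_bsel vy yf p1 p2 :
  bpoly_eval vx vy (bsel yf p1 p2) =
  if vy yf then bpoly_eval vx vy p2 else bpoly_eval vx vy p1.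
Proof.
rewrite /bsel !bpoly_eval_cat !bpoly_eval_mulv /=.
by case: (vy yf); rewrite /= ?addbA ?addbb ?addbF.
Qed.

Lemma phase_eval_cat (R : realType) vy (P Q : phase) :
  phase_eval R vx vy (P ++ Q) = phase_eval R vx vy P + phase_eval R vx vy Q.
Proof. by rewrite /phase_eval big_cat. Qed.

Lemma phase_eval_psel (R : realType) vy yf P1 P2 :
  phase_eval R vx vy (psel yf P1 P2) =
  if vy yf then phase_eval R vx vy P2 else phase_eval R vx vy P1.
Proof.
rewrite /psel /phase_eval !big_cat !big_map /=; case: (vy yf) => /=.
  rewrite addrA -big_split big1 ?add0r //= => c _.
  by rewrite /dyadic_val /= mulrNz !mulNr subrr.
by rewrite [X in _ + (_ + X)]big1 ?[X in _ + (X + _)]big1 ?addr0 // => c _; rewrite mulr0.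
Qed.

Lemma inst_map_msel vy yf (m1 m2 : {fmap nat -> bpoly}) :
  domf m1 = domf m2 ->
  inst_map vx vy (msel yf m1 m2) = if vy yf then inst_map vx vy m2 else inst_map vx vy m1.
Proof.
move=> eq_dom; apply/fmapP => k; rewrite fnd_inst_map.
case: (fndP m1 k) => [k1|kN1]; last first.
  have kN2 : k \notin domf m2 by rewrite -eq_dom.
  by rewrite not_fnd //; case: (vy yf); rewrite fnd_inst_map not_fnd.
have k2 : k \in domf m2 by rewrite -eq_dom.
rewrite in_fnd /= ffunE bpoly_eval_bsel in_fnd.
by case: (vy yf); rewrite fnd_inst_map ?(in_fnd k1) ?(in_fnd k2).
Qed.

Lemma inst_stack_msel vy yf (s1 s2 : cmem) :
  size s1 = size s2 -> (forall t, domf (nth [fmap] s1 t) = domf (nth [fmap] s2 t)) ->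
  inst_stack vx vy [seq msel yf mm.1 mm.2 | mm <- zip s1 s2] =
  if vy yf then inst_stack vx vy s2 else inst_stack vx vy s1.
Proof.
elim: s1 s2 => [|m1 s1 IHs] [|m2 s2] //=; first by case: (vy yf).
move=> [eq_size] eq_dom; rewrite (inst_map_msel _ _ (eq_dom 0%N)).
have := IHs s2 eq_size (fun t => eq_dom t.+1); rewrite /inst_stack => ->.
by case: (vy yf).
Qed.

Lemma inst_map_catf vy (m1 m2 : {fmap nat -> bpoly}) :
  inst_map vx vy (catf m1 m2) = catf (inst_map vx vy m1) (inst_map vx vy m2).
Proof.
by apply/fmapP => k; rewrite fnd_inst_map !fnd_cat !fnd_inst_map; case: ifP.
Qed.

Lemma nth_inst_stack vy (s : cmem) t :
  nth [fmap] (inst_stack vx vy s) t = inst_map vx vy (nth [fmap] s t).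
Proof.
case: (ltnP t (size s)) => ts; first by rewrite (nth_map [fmap]).
rewrite !nth_default ?size_map //.
by apply/fmapP => k; rewrite fnd_inst_map !fnd_fmap0.
Qed.

Lemma inst_stack_union vy (s1 s2 : cmem) :
  inst_stack vx vy (stack_union s1 s2) =
  stack_union (inst_stack vx vy s1) (inst_stack vx vy s2).
Proof.
rewrite /stack_union /inst_stack /mkseq -map_comp !size_map; apply: eq_map => t /=.
by rewrite !nth_inst_stack inst_map_catf.
Qed.

End Evaluation.

Lemma valSU (A S X : {fset nat}) :
  [disjoint A & X] -> {in A, valS (S `|` X) =1 valS S}.
Proof.
by move=> /fdisjointP dAX j jA; rewrite /valS inE (negbTE (dAX j jA)) orbF.
Qed.

Section VectorMap.
Variable R : realType.
Implicit Types (h : hps R) (vx vy : nat -> bool) (eta : history).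

Lemma expiD (x y : R) : expi (x + y) = expi x * expi y.
Proof.
rewrite /expi !mulrDr cosD sinD.
by rewrite -[((_ +i* _) * (_ +i* _))%C]/(_ +i* _)%C; congr (_ +i* _)%C; ring.
Qed.

Lemma ket_catf (i1 i2 b : {fmap nat -> bool}) : [disjoint domf i1 & domf i2] ->
  ket R (catf i1 i2) b = if domf b == domf i1 `|` domf i2 then
     ket R i1 b.[& domf i1] * ket R i2 b.[& domf i2] else 0.
Proof.
move=> dj; rewrite /ket eq_catf_restrict //.
by case: (domf b == _); case: (_ == i1); case: (_ == i2);
  rewrite /= ?rmorph1 ?rmorph0 ?mulr1 ?mulr0.
Qed.

Lemma vtensor_sum (I J : Type) (r1 : seq I) (r2 : seq J) (A1 A2 : {fset nat})
    (f : I -> qvec R) (g : J -> qvec R) b :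
  \sum_(i <- r1) \sum_(j <- r2) vtensor A1 A2 (f i) (g j) b =
  vtensor A1 A2 (fun b => \sum_(i <- r1) f i b) (fun b => \sum_(j <- r2) g j b) b.
Proof.
rewrite /vtensor; case: ifP => _; last by rewrite big1 // => i _; rewrite big1.
by rewrite big_distrl; apply: eq_bigr => i _; rewrite big_distrr.
Qed.

Lemma eq_prodY (D : {fset nat}) vy vy' :
  {in D, vy =1 vy'} -> prodY R D vy = prodY R D vy'.
Proof. by move=> eq_vy; apply: eq_big_seq => j /eq_vy ->. Qed.

Lemma prodY_valS (D S : {fset nat}) : prodY R D (valS S) = (D `<=` S)%:R.
Proof.
rewrite /prodY /valS (_ : D `<=` S = all [in S] D); last exact/fsubsetP/allP.
elim: (enum_fset D) => [|j s IHs]; first by rewrite big_nil.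
by rewrite big_cons /= IHs; case: (j \in S); rewrite ?mul1r ?mul0r.
Qed.

Lemma is_history_shape (h : hps R) eta : is_history h eta ->
  size eta = size (hcl h) /\ forall t, domf (nth [fmap] eta t) = domf (nth [fmap] (hcl h) t).
Proof.
rewrite /is_history; elim: (hcl h) eta => [|m s IHs] [|e eta] //=.
  by split=> // t; rewrite !nth_nil.
by case/andP=> /eqP eq_dom /IHs[-> eq_nth]; split=> // [[]].
Qed.

Definition path_term h vx vy eta : qvec R := fun b =>
  if inst_stack vx vy (hcl h) == eta then
    (hs h vx vy)%:C * expi (phase_eval R vx vy (hP h)) * ket R (inst_map vx vy (hqu h)) b
  else 0.

Lemma xiE h vx eta b :
  xi h vx eta b = \sum_(S <- fpowerset (hsu h)) path_term h vx (valS S) eta b.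
Proof. by rewrite /xi big_mkcond. Qed.

Lemma eq_path_term h vx vy vy' eta :
  wf_hps h -> {in hsu h, vy =1 vy'} -> path_term h vx vy eta = path_term h vx vy' eta.
Proof.
case=> suP suqu sucl su_s _ eq_vy; rewrite /path_term (su_s vx vy vy' eq_vy).
rewrite (eq_phase_eval _ _ (sub_in1 suP eq_vy)).
rewrite (eq_inst_map _ (fun k => sub_in1 (suqu k) eq_vy)).
suff -> : inst_stack vx vy (hcl h) = inst_stack vx vy' (hcl h) by [].
by apply/eq_in_map => m hm; exact: eq_inst_map (fun k => sub_in1 (sucl m hm k) eq_vy).
Qed.

Lemma xi_pad h (D : {fset nat}) vx eta b : wf_hps h -> [disjoint hsu h & D] ->
  \sum_(S <- fpowerset (hsu h `|` D)) path_term h vx (valS S) eta b * (prodY R D (valS S))%:C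
  = xi h vx eta b.
Proof.
move=> wfh dD; under eq_bigr do rewrite prodY_valS rmorph_nat mulr_natr mulrb.
rewrite big_fpowerset_supset // xiE; apply: eq_bigr => T _.
by rewrite (eq_path_term _ _ wfh (valSU T dD)).
Qed.

Lemma path_term_boxplus h1 h2 a yf vx vy eta b : sum_defined h1 h2 ->
  path_term (boxplus a yf h1 h2) vx vy eta b =
  if vy yf then path_term h2 vx vy eta b * (prodY R (hsu h1 `\` hsu h2) vy)%:C
  else a%:C * path_term h1 vx vy eta b * (prodY R (hsu h2 `\` hsu h1) vy)%:C.
Proof.
case=> eq_qu eq_size eq_cl; rewrite /path_term /=.
rewrite inst_stack_msel // phase_eval_psel inst_map_msel //.
case: (vy yf); case: (_ == eta); rewrite ?rmorphM ?(mul0r, mulr0) //; ring.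
Qed.

Lemma xi_boxplus h1 h2 a yf vx eta b :
  wf_hps h1 -> wf_hps h2 -> sum_defined h1 h2 -> yf \notin hsu h1 `|` hsu h2 ->
  xi (boxplus a yf h1 h2) vx eta b = a%:C * xi h1 vx eta b + xi h2 vx eta b.
Proof.
move=> wf1 wf2 sd yfN; have [yf1 yf2] : yf \notin hsu h1 /\ yf \notin hsu h2.
  by apply/norP; rewrite -in_fsetU.
have eq_fsetUD (A B : {fset nat}) : A `|` B = A `|` (B `\` A).
  by apply/fsetP => j; rewrite !inE; case: (j \in A).
have disj_D (A B : {fset nat}) : [disjoint A & B `\` A].
  by apply/fdisjointP => j jA; rewrite inE jA.
rewrite xiE big_fpowersetU1 // big_split /=; congr (_ + _).
  rewrite (eq_fsetUD (hsu h1)) -(xi_pad _ _ _ wf1 (disj_D _ (hsu h2))) mulr_sumr.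
  rewrite -eq_fsetUD.
  apply: eq_big_seq => S; rewrite fpowersetE => /fsubsetP SN.
  rewrite path_term_boxplus // mulrA; case: ifP => // /SN.
  by rewrite (negbTE yfN).
rewrite fsetUC (eq_fsetUD (hsu h2)) -(xi_pad _ _ _ wf2 (disj_D _ (hsu h1))).
rewrite -eq_fsetUD fsetUC.
apply: eq_bigr => S _; rewrite path_term_boxplus // /valS !inE eqxx orbT.
rewrite -/(valS _) (eq_path_term _ _ wf2 (valSU _ _)) ?fdisjointX1 //.
by rewrite (eq_prodY (valSU _ _)) // fdisjointX1 inE (negbTE yf1) andbF.
Qed.

Lemma path_term_tensor h1 h2 vx vy eta1 eta2 b :
  tensor_defined h1 h2 -> is_history h1 eta1 -> is_history h2 eta2 ->
  path_term (tensor h1 h2) vx vy (hist_tensor eta1 eta2) b =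
  vtensor (domf (hqu h1)) (domf (hqu h2))
    (path_term h1 vx vy eta1) (path_term h2 vx vy eta2) b.
Proof.
case=> _ dqu dcl /is_history_shape[size1 dom1] /is_history_shape[size2 dom2].
set I1 := inst_stack vx vy (hcl h1); set I2 := inst_stack vx vy (hcl h2).
have split_eq : (stack_union I1 I2 == hist_tensor eta1 eta2) = (I1 == eta1) && (I2 == eta2).
  apply/eqP/andP => [eq_union|[/eqP -> /eqP ->] //].
  suff [-> ->] : I1 = eta1 /\ I2 = eta2 by [].
  apply: stack_union_inj eq_union => [||t|t|t]; rewrite ?size_map ?nth_inst_stack //=.
rewrite /path_term /vtensor /= inst_stack_union split_eq inst_map_catf ket_catf //.
rewrite phase_eval_cat expiD rmorphM.
by case: (I1 == eta1); case: (I2 == eta2); case: (domf b == _);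
  rewrite /= ?(mul0r, mulr0) //; ring.
Qed.

Lemma xi_tensor h1 h2 vx eta1 eta2 b :
  wf_hps h1 -> wf_hps h2 -> tensor_defined h1 h2 ->
  is_history h1 eta1 -> is_history h2 eta2 ->
  xi (tensor h1 h2) vx (hist_tensor eta1 eta2) b =
  vtensor (domf (hqu h1)) (domf (hqu h2)) (xi h1 vx eta1) (xi h2 vx eta2) b.
Proof.
move=> wf1 wf2 td he1 he2; have [dsu _ _] := td.
rewrite xiE big_fpowersetU //.
under eq_big_seq => S1 /[!fpowersetE] S1sub.
  under eq_big_seq => S2 /[!fpowersetE] S2sub.
    rewrite path_term_tensor // (eq_path_term _ _ wf1 (valSU _ (fdisjointWr S2sub dsu))).
    rewrite fsetUC (eq_path_term _ _ wf2 (valSU _ _)); last first.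
      by rewrite fdisjoint_sym (fdisjointWl S1sub).
    over.
  over.
by rewrite vtensor_sum /vtensor; case: ifP => // _; rewrite !xiE.
Qed.

End VectorMap.

Theorem mainTheorem1 (R : realType) (h1 h2 : hps R) :
  wf_hps h1 -> wf_hps h2 ->
  (forall (a : R) (yf : nat),
      constructible a -> sum_defined h1 h2 -> yf \notin (hsu h1 `|` hsu h2)%fset ->
      forall (vx : nat -> bool) (eta : history) (b : basis),
        xi (boxplus a yf h1 h2) vx eta b = a%:C * xi h1 vx eta b + xi h2 vx eta b)
  /\
  (tensor_defined h1 h2 ->
      forall (vx : nat -> bool) (eta1 eta2 : history),
        is_history h1 eta1 -> is_history h2 eta2 ->
        forall b : basis,
          xi (tensor h1 h2) vx (hist_tensor eta1 eta2) b
          = vtensor (domf (hqu h1)) (domf (hqu h2)) (xi h1 vx eta1) (xi h2 vx eta2) b).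
Proof.
move=> wf1 wf2; split=> [a yf _ sd yfN vx eta b | td vx eta1 eta2 he1 he2 b].
  exact: xi_boxplus.
exact: xi_tensor.
Qed.
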